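(* Let $(d_s,d_x)\in\mathcal D_{\mathrm{in}}$. If $\lambda_s^\star=0$, then any $(M,d_s,d_x,\epsilon)$ code must satisfy \[\epsilon\ge\sup_{\gamma\ge0}\Big\{\mathbb P\big[\jmath_X(X,d_s,d_x)-\log M\ge\gamma\big]-\exp(-\gamma)\Big\}.\]
   Context: Let $\mathcal S,\mathcal X,\widehat{\mathcal S},\widehat{\mathcal X}$ be finite sets, $P_{SX}$ a distribution on $\mathcal S\times\mathcal X$, and $\mathsf d_s:\mathcal S\times\widehat{\mathcal S}\to[0,\infty)$, $\mathsf d_x:\mathcal X\times\widehat{\mathcal X}\to[0,\infty)$ distortion measures. An $(M,d_s,d_x,\epsilon)$ code is a random encoder $P_{U|X}:\mathcal X\to\{1,\dots,M\}$ and a random decoder $P_{ZY|U}:\{1,\dots,M\}\to\widehat{\mathcal S}\times\widehat{\mathcal X}$ (so $S-X-U-(Z,Y)$) with $\mathbb P[\mathsf d_s(S,Z)>d_s\text{ or }\mathsf d_x(X,Y)>d_x]\le\epsilon$. $\bar{\mathsf d}_s(x,z)=\mathbb E[\mathsf d_s(S,z)\mid X=x]$; $R_{S,X}(d_s,d_x)=\min_{P_{ZY|X}}I(X;Z,Y)$ subject to $\mathbb E[\bar{\mathsf d}_s(X,Z)]\le d_s$, $\mathbb E[\mathsf d_x(X,Y)]\le d_x$, with minimizer set $\mathcal P^\star(d_s,d_x)$. With $\mathcal D_{\mathrm{adm}}=\{d_s\ge\mathbb E[\min_z\bar{\mathsf d}_s(X,z)],\,d_x\ge\mathbb E[\min_y\mathsf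 d_x(X,y)]\}$, partition it into $\mathcal D_{sx}$ (every minimizer tight in both constraints), $\mathcal D_{\bar sx}$ (some minimizer strict in $s$, every minimizer tight in $x$), $\mathcal D_{s\bar x}$ (every minimizer tight in $s$, some strict in $x$), $\mathcal D_{\bar s\bar x}$ (some minimizer strict in $s$, some strict in $x$); $\mathcal D_{\mathrm{in}}$ is the union of their interiors, on which $R_{S,X}$ is differentiable; $\lambda_s^\star=-\partial R_{S,X}/\partial d_s$, $\lambda_x^\star=-\partial R_{S,X}/\partial d_x$. Fix $P_{Z^\star Y^\star|X}\in\mathcal P^\star(d_s,d_x)$ with output marginal $P_{Z^\star Y^\star}$, and $\jmath_X(x,d_s,d_x)=-\log\mathbb E[\exp\{\lambda_s^\star d_s+\lambda_x^\star d_x-\lambda_s^\star\bar{\mathsf d}_s(x,Z^\star)-\lambda_x^\star\mathsf d_x(x,Y^\star)\}]$ with expectation over $P_{Z^\star Y^\star}$; $X\sim P_X$. $\log$, $\exp$ to a common base. *)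

From HB Require Import structures.
From mathcomp Require Import all_boot all_order all_algebra.
From mathcomp Require Import all_classical all_reals all_analysis.
Set Implicit Arguments. Unset Strict Implicit. Unset Printing Implicit Defensive.
Import Order.TTheory GRing.Theory Num.Theory.
Import numFieldNormedType.Exports.
Local Open Scope classical_set_scope.
Local Open Scope ring_scope.

Section JointSourceCoding.
Variable R : realType.

Definition logb (b x : R) : R := ln x / ln b.
Definition expb (b x : R) : R := powR b x.

Definition is_dist (T : finType) (p : T -> R) : Prop :=
  (forall t, 0 <= p t) /\ \sum_(t : T) p t = 1.

Definition is_kernel (A B : finType) (k : A -> B -> R) : Prop :=
  forall a, is_dist (k a).

Variables (S X Sh Xh : finType).
Variable b : R.
Variable P : S * X -> R.
Variable dS : S -> Sh -> R.
Variable dX : X -> Xh -> R.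

Definition PX (x : X) : R := \sum_(s : S) P (s, x).

(* \bar d_s(x,z) = E[d_s(S,z) | X = x]  (set to 0 when P_X(x) = 0) *)
Definition dSbar (x : X) (z : Sh) : R :=
  (\sum_(s : S) P (s, x) * dS s z) / PX x.

(* output marginal of a test channel K = P_{ZY|X} *)
Definition outmarg (K : X -> Sh * Xh -> R) (w : Sh * Xh) : R :=
  \sum_(x : X) PX x * K x w.

(* mutual information I(X; Z,Y) in base b, with 0 log 0 = 0 *)
Definition MI (K : X -> Sh * Xh -> R) : R :=
  \sum_(x : X) \sum_(w : Sh * Xh)
    (if PX x * K x w == 0 then 0
     else PX x * K x w * logb b (K x w / outmarg K w)).

Definition EdS (K : X -> Sh * Xh -> R) : R :=
  \sum_(x : X) \sum_(w : Sh * Xh) PX x * K x w * dSbar x w.1.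
Definition EdX (K : X -> Sh * Xh -> R) : R :=
  \sum_(x : X) \sum_(w : Sh * Xh) PX x * K x w * dX x w.2.

Definition feasible (ds dx : R) (K : X -> Sh * Xh -> R) : Prop :=
  is_kernel K /\ EdS K <= ds /\ EdX K <= dx.

(* R_{S,X}(d_s,d_x) : the minimum (= infimum, attained) of I(X;Z,Y) *)
Definition RSX (ds dx : R) : R :=
  inf [set MI K | K in feasible ds dx].

Definition minimizer (ds dx : R) (K : X -> Sh * Xh -> R) : Prop :=
  feasible ds dx K /\ MI K = RSX ds dx.

Definition Dadm (d : (R * R)%type) : Prop :=
  \sum_(x : X) PX x * inf (range (dSbar x)) <= d.1
  /\ \sum_(x : X) PX x * inf (range (dX x)) <= d.2.

Definition D_sx (d : (R * R)%type) : Prop := Dadm d /\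
  (forall K, minimizer d.1 d.2 K -> EdS K = d.1 /\ EdX K = d.2).
Definition D_sbarx (d : (R * R)%type) : Prop := [/\ Dadm d,
  (exists K, minimizer d.1 d.2 K /\ EdS K < d.1) &
  (forall K, minimizer d.1 d.2 K -> EdX K = d.2)].
Definition D_sxbar (d : (R * R)%type) : Prop := [/\ Dadm d,
  (forall K, minimizer d.1 d.2 K -> EdS K = d.1) &
  (exists K, minimizer d.1 d.2 K /\ EdX K < d.2)].
Definition D_sbarxbar (d : (R * R)%type) : Prop := [/\ Dadm d,
  (exists K, minimizer d.1 d.2 K /\ EdS K < d.1) &
  (exists K, minimizer d.1 d.2 K /\ EdX K < d.2)].

Definition Din (d : (R * R)%type) : Prop :=
  (D_sx)° d \/ (D_sbarx)° d \/ (D_sxbar)° d \/ (D_sbarxbar)° d.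

Definition lambda_s (ds dx : R) : R := - derive1 (fun t => RSX t dx) ds.
Definition lambda_x (ds dx : R) : R := - derive1 (fun t => RSX ds t) dx.

Definition jX (K : X -> Sh * Xh -> R) (ds dx : R) (x : X) : R :=
  - logb b (\sum_(w : Sh * Xh) outmarg K w *
      expb b (lambda_s ds dx * ds + lambda_x ds dx * dx
              - lambda_s ds dx * dSbar x w.1 - lambda_x ds dx * dX x w.2)).

(* (M, d_s, d_x, eps) code: random encoder E = P_{U|X}, random decoder
   D = P_{ZY|U}, with S - X - U - (Z,Y) *)
Definition excess_prob (M : nat) (E : X -> 'I_M -> R) (D : 'I_M -> Sh * Xh -> R)
  (ds dx : R) : R :=
  \sum_(s : S) \sum_(x : X) \sum_(u : 'I_M) \sum_(w : Sh * Xh)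
    P (s, x) * E x u * D u w *
    (if (dS s w.1 > ds) || (dX x w.2 > dx) then 1 else 0).

Definition is_code (M : nat) (E : X -> 'I_M -> R) (D : 'I_M -> Sh * Xh -> R)
  (ds dx eps : R) : Prop :=
  is_kernel E /\ is_kernel D /\ excess_prob E D ds dx <= eps.

Definition tail_prob (K : X -> Sh * Xh -> R) (ds dx : R) (M : nat) (gamma : R) : R :=
  \sum_(x : X) PX x * (if jX K ds dx x - logb b M%:R >= gamma then 1 else 0).

End JointSourceCoding.

From Pilot Require Import Defs.
From HB Require Import structures.
From mathcomp Require Import all_boot all_order all_algebra.
From mathcomp Require Import all_classical all_reals all_analysis.
From mathcomp Require Import ring lra.
Set Implicit Arguments. Unset Strict Implicit. Unset Printing Implicit Defensive.
Import Order.TTheory GRing.Theory Num.Theory.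
Import numFieldNormedType.Exports.
Local Open Scope classical_set_scope.
Local Open Scope ring_scope.

(* The rate function R_{S,X} is convex and nonincreasing, so at an
   interior point it has a supporting plane with d_x-slope -lambda_x and any
   d_s-slope mu between its one-sided d_s-derivatives.  The optimal test channel
   K then minimizes the Lagrangian I(X;Z,Y) - mu E[dSbar] + lambda_x E[d_x] over
   all channels, and the Kuhn-Tucker conditions of that problem (K is the tilt of
   its output marginal Q, and Q minimizes the dual functional) read, for mu = 0,
     sum_x P_X(x) b^(-lambda_x d_x(x,y)) / N(x) <= 1  for every output y,
   where N(x) = E_Q[b^(-lambda_x d_x(x,Y))] and b^(-j_X(x)) = b^(lambda_x d_x) N(x).
   If R_{S,X} is differentiable in d_s, then mu = -lambda_s = 0 is admissible.
   Otherwise K minimizes the Lagrangians of two different slopes, which forces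
   dSbar(x, .) to be constant on the support of Q, and the condition at a
   nonzero slope reduces to the one at mu = 0.
   The bound is then a change of measure: on {j_X(X) - log M >= gamma} either a
   distortion is exceeded or 1 <= b^(-gamma)/M * b^(-lambda_x d_x(X,Y))/N(X),
   and summing the latter over the M codewords with the Kuhn-Tucker inequality
   gives at most b^(-gamma). *)

Section RealFacts.
Variable R : realType.
Implicit Types c e n s t u x y : R.

Lemma ln_le_subr1 u : 0 < u -> ln u <= u - 1.
Proof.
move=> u0; have := @le_ln1Dx R (u - 1); rewrite (addrC 1) subrK; apply.
by rewrite ltrBrDl subrr.
Qed.

Lemma ln_lt_subr1 u : 0 < u -> u != 1 -> ln u < u - 1.
Proof.
move=> u0 u1; have lnu0 : ln u != 0 by rewrite ln_eq0.
by have := expR_gt1Dx lnu0; rewrite lnK ?posrE //; lra.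
Qed.

Lemma ler_addgt0_mulPr x y c : 0 <= c ->
  (forall e, 0 < e -> x <= y + e * c) -> x <= y.
Proof.
move=> c0 h; apply/ler_addgt0Pr => e e0.
have c1 : 0 < c + 1 by rewrite ltr_wpDl.
apply: le_trans (h (e / (c + 1)) (divr_gt0 e0 c1)) _.
by rewrite lerD2l -mulrA ler_piMr ?(ltW e0) // ler_pdivrMl // mulr1 lerDl.
Qed.

Lemma le0_odds s c : 0 <= c ->
  (forall t, 0 < t -> t < 1 -> s <= t / (1 - t) * c) -> s <= 0.
Proof.
move=> c0 h; apply: (ler_addgt0_mulPr c0) => e e0.
have e1 : 0 < 1 + e by rewrite addr_gt0.
have t1 : e / (1 + e) < 1 by rewrite ltr_pdivrMr // mul1r ltrDr.
have -> : e = e / (1 + e) / (1 - e / (1 + e)).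
  by field; rewrite !gt_eqF //; lra.
by rewrite add0r; apply: h; rewrite ?divr_gt0.
Qed.

Lemma mix_ratio_bound n e t : 0 < n -> 0 < e -> 0 < t -> t < 1 ->
  (e - n) / n <= (e - n) / ((1 - t) * n + t * e) + t / (1 - t) * ((e - n) / n) ^+ 2.
Proof.
move=> n0 e0 t0 t1.
have t1p : 0 < 1 - t by rewrite subr_gt0.
set m := (1 - t) * n + t * e.
have m0 : 0 < m by rewrite addr_gt0 ?mulr_gt0.
have nm : (1 - t) * n <= m by rewrite lerDl mulr_ge0 // ltW.
have -> : t / (1 - t) * ((e - n) / n) ^+ 2 = t * (e - n) ^+ 2 / ((1 - t) * n * n).
  by field; rewrite !gt_eqF.
have -> : (e - n) / n = (e - n) / m + t * (e - n) ^+ 2 / (n * m).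
  by rewrite /m; field; rewrite !gt_eqF.
rewrite lerD2l.
apply: ler_wpM2l; first by rewrite mulr_ge0 ?sqr_ge0 ?ltW.
rewrite lef_pV2 ?posrE ?mulr_gt0 // [leLHS]mulrC.
by rewrite ler_wpM2l // ltW.
Qed.

Lemma small_scale (u v c : R) : 0 < c ->
  exists2 t : R, 0 < t < 1 & t * `|u| < c /\ t * `|v| < c.
Proof.
move=> c0; set D := `|u| + `|v| + 1.
have D1 : 1 <= D by rewrite lerDr addr_ge0.
have D0 : 0 < D by apply: lt_le_trans D1.
exists (Num.min 2^-1 (c / D)).
  by rewrite lt_min invr_gt0 ltr0n divr_gt0 //= gt_min invf_lt1 ?ltr1n.
have small y : `|y| < D -> Num.min 2^-1 (c / D) * `|y| < c.
  move=> yD; have m_le : Num.min 2^-1 (c / D) <= c / D by rewrite ge_min lexx orbT.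
  apply: le_lt_trans (ler_wpM2r (normr_ge0 y) m_le) _.
  by rewrite mulrAC ltr_pdivrMr // ltr_pM2l.
by have := normr_ge0 u; have := normr_ge0 v; split; apply: small; rewrite /D; lra.
Qed.
End RealFacts.

Lemma interior_box (R : realType) (A : set (R * R)) (d : R * R) : A° d ->
  exists2 e : R, 0 < e & forall p : R * R, `|p.1 - d.1| < e -> `|p.2 - d.2| < e -> A p.
Proof.
move=> /nbhs_ballP[e e0 de]; exists e => // p h1 h2; apply: de.
by split; rewrite /ball /= distrC.
Qed.

Lemma near0'_ball (R : realType) (Q : R -> Prop) : (\forall t \near 0^', Q t) ->
  exists2 e : R, 0 < e & forall t, t != 0 -> `|t| < e -> Q t.
Proof.
move=> /nbhs_ballP[e e0 de]; exists e => // t t0 te; apply: de => //.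
by rewrite /ball /= sub0r normrN.
Qed.

Lemma near0_le_tangent (R : realType) (g : R -> R) (x l e : R) : 0 < e ->
  (g (h + x) - g x) / h @[h --> 0^'] --> l ->
  exists2 del : R, 0 < del & forall t, `|t| < del -> g (t + x) <= g x + l * t + e * `|t|.
Proof.
move=> e0 /cvgrPdist_lt/(_ e e0)/near0'_ball[del del0 hdel]; exists del => // t tl.
have [->|t0] := eqVneq t 0; first by rewrite add0r mulr0 normr0 mulr0 !addr0.
have g_eq : g (t + x) = g x + l * t + ((g (t + x) - g x) / t - l) * t by field.
have : ((g (t + x) - g x) / t - l) * t <= e * `|t|.
  apply: le_trans (ler_norm _) _; rewrite normrM distrC ler_wpM2r //.
  exact/ltW/hdel.
lra.
Qed.

Section Derive1Slope.
Variable R : realType.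
Implicit Types (f : R -> R) (x l : R).

Lemma derive1_slope f x l : (f (h + x) - f x) / h @[h --> 0^'] --> l -> derive1 f x = l.
Proof.
move=> fl; rewrite /derive1.
have -> : (fun h => h^-1 *: (f (h + x) - f x)) = (fun h => (f (h + x) - f x) / h).
  by apply/funext => h; rewrite mulrC.
exact: cvg_lim.
Qed.

(* Without a limit, [lim] returns the default point [0] of [R]. *)
Lemma derive1_no_slope f x :
  ~ (exists l, (f (h + x) - f x) / h @[h --> 0^'] --> l) -> derive1 f x = 0.
Proof.
move=> nl; rewrite /derive1 /lim /lim_in getPN // => l fl; apply: nl; exists l.
move: fl; suff -> : (fun h => h^-1 *: (f (h + x) - f x)) = (fun h => (f (h + x) - f x) / h) by [].
by apply/funext => h; rewrite mulrC.
Qed.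

Lemma cvg_slope_le0 f x r l : 0 < r -> (forall h, 0 < h < r -> f (h + x) <= f x) ->
  (f (h + x) - f x) / h @[h --> 0^'] --> l -> l <= 0.
Proof.
move=> r0 f_le /cvgrPdist_lt fl; apply/ler_addgt0Pr => e e0; rewrite add0r.
have [del del0 hdel] := near0'_ball (fl e e0).
set t := Num.min del r / 2.
have m0 : 0 < Num.min del r by rewrite lt_min del0 r0.
have t0 : 0 < t by rewrite divr_gt0.
have tm : t < Num.min del r by rewrite ltr_pdivrMr // ltr_pMr // ltr1n.
move: tm; rewrite lt_min => /andP[tdel tr].
have q_le0 : (f (t + x) - f x) / t <= 0.
  by rewrite pmulr_lle0 ?invr_gt0 // subr_le0 f_le // t0.
have := hdel t (lt0r_neq0 t0); rewrite gtr0_norm // => /(_ tdel) dist_lt.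
have := ler_norm (l - (f (t + x) - f x) / t); lra.
Qed.

End Derive1Slope.

Section KLTerm.
Variable R : realType.
Implicit Types a c e n q t : R.

Definition kl a c := a * ln (a / c).

Lemma kl0 c : kl 0 c = 0.
Proof. by rewrite /kl mul0r. Qed.

Lemma klxx a : kl a a = 0.
Proof.
rewrite /kl; have [->|a0] := eqVneq a 0; first by rewrite mul0r.
by rewrite divff // ln1 mulr0.
Qed.

Lemma klN a c : 0 < a -> 0 < c -> kl a c = - (a * ln (c / a)).
Proof. by move=> a0 c0; rewrite /kl -mulrN -lnV ?posrE ?divr_gt0 // invf_div. Qed.

Lemma kl_ge_subr c q : 0 <= c -> 0 <= q -> (0 < c -> 0 < q) -> c - q <= kl c q.
Proof.
move=> c0 q0 cq; have [->|cn0] := eqVneq c 0; first by rewrite kl0 sub0r oppr_le0.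
have cp : 0 < c by rewrite lt0r cn0.
have qp := cq cp.
rewrite klN // lerNr opprB (le_trans (ler_wpM2l (ltW cp) (ln_le_subr1 (divr_gt0 qp cp)))) //.
by rewrite mulrBr mulr1 mulrCA divff ?mulr1 // gt_eqF.
Qed.

Lemma kl_eq_subr c q : 0 <= c -> 0 <= q -> (0 < c -> 0 < q) -> kl c q = c - q -> c = q.
Proof.
move=> c0 q0 cq; have [->|cn0] := eqVneq c 0.
  by rewrite kl0 sub0r => /eqP; rewrite eq_sym oppr_eq0 => /eqP ->.
have cp : 0 < c by rewrite lt0r cn0.
have qp := cq cp.
have [//|qc] := eqVneq c q.
have qc1 : q / c != 1 by apply: contra qc => /eqP /divr1_eq ->.
have := ln_lt_subr1 (divr_gt0 qp cp) qc1; rewrite -(ltr_pM2l cp).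
rewrite klN // mulrBr mulr1 mulrCA divff ?mulr1 ?gt_eqF // => lt_cq e.
by move: lt_cq; rewrite -[c * _]opprK e; lra.
Qed.

Lemma kl_subr a c q : 0 <= a -> (0 < a -> 0 < c) -> (0 < a -> 0 < q) ->
  kl a c - kl a q = a * ln (q / c).
Proof.
move=> a0 ac aq; have [->|an0] := eqVneq a 0; first by rewrite !kl0 mul0r subrr.
have ap : 0 < a by rewrite lt0r an0.
rewrite /kl -mulrBr !ln_div ?posrE ?ac ?aq //; congr (_ * _); lra.
Qed.

Lemma kl_tilt a c e n : 0 <= a -> (0 < a -> 0 < c) -> 0 < e -> 0 < n ->
  kl a c - a * ln e + a * ln n = kl a (c * e / n).
Proof.
move=> a0 ac e0 n0; have [->|an0] := eqVneq a 0; first by rewrite !kl0 !mul0r subrr addr0.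
have ap : 0 < a by rewrite lt0r an0.
have cp := ac ap.
rewrite /kl -mulrBr -mulrDr !ln_div ?posrE ?mulr_gt0 ?divr_gt0 ?invr_gt0 // ?lnM ?posrE //.
by congr (_ * _); lra.
Qed.

Lemma klZ t a c : 0 <= t -> kl (t * a) (t * c) = t * kl a c.
Proof.
rewrite le_eqVlt => /orP[/eqP <-|t0]; first by rewrite !mul0r kl0.
by rewrite /kl -mulrA invfM mulrACA divff ?gt_eqF // mul1r.
Qed.

Lemma kl_sumD a1 a2 c1 c2 : 0 <= a1 -> 0 <= a2 -> 0 <= c1 -> 0 <= c2 ->
  (0 < a1 -> 0 < c1) -> (0 < a2 -> 0 < c2) ->
  kl (a1 + a2) (c1 + c2) <= kl a1 c1 + kl a2 c2.
Proof.
move=> a10 a20 c10 c20 ac1 ac2.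
have [A0|An0] := eqVneq (a1 + a2) 0.
  move: A0 => /eqP; rewrite paddr_eq0 // => /andP[/eqP-> /eqP->].
  by rewrite addr0 !kl0 addr0.
set A := a1 + a2; set C := c1 + c2.
have Ap : 0 < A by rewrite lt0r An0 addr_ge0.
have Cp : 0 < C.
  have [a1p|] := ltP 0 a1; first by rewrite (lt_le_trans (ac1 a1p)) // lerDl.
  rewrite le_eqVlt ltNge a10 orbF => /eqP a1e.
  by rewrite (lt_le_trans (ac2 _)) ?lerDr //; move: Ap; rewrite /A a1e add0r.
have gibbs a c : 0 <= a -> 0 <= c -> (0 < a -> 0 < c) ->
    a - c * A / C <= kl a c - a * ln A + a * ln C.
  move=> a0 c0 ac; rewrite (kl_tilt a0 ac Ap Cp).
  apply: kl_ge_subr => //; first by rewrite divr_ge0 ?mulr_ge0 // ltW.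
  by move=> /ac cp; rewrite divr_gt0 ?mulr_gt0.
have := lerD (gibbs _ _ a10 c10 ac1) (gibbs _ _ a20 c20 ac2).
have -> : a1 - c1 * A / C + (a2 - c2 * A / C) = 0.
  by rewrite /A /C; field; rewrite -/C gt_eqF.
move=> sum_ge0; rewrite [kl A C]/kl ln_div ?posrE // /A; lra.
Qed.

Lemma kl_convex t a1 a2 c1 c2 : 0 <= t <= 1 ->
  0 <= a1 -> 0 <= a2 -> 0 <= c1 -> 0 <= c2 ->
  (0 < a1 -> 0 < c1) -> (0 < a2 -> 0 < c2) ->
  kl ((1 - t) * a1 + t * a2) ((1 - t) * c1 + t * c2) <= (1 - t) * kl a1 c1 + t * kl a2 c2.
Proof.
move=> /andP[t0 t1] a10 a20 c10 c20 ac1 ac2.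
have t1' : 0 <= 1 - t by rewrite subr_ge0.
have acZ s a c : 0 <= s -> (0 < a -> 0 < c) -> 0 < s * a -> 0 < s * c.
  move=> s0 ac; rewrite le_eqVlt in s0; case/orP: s0 => [/eqP <-|sp].
    by rewrite mul0r ltxx.
  by rewrite !pmulr_rgt0 //; apply: ac.
rewrite -(klZ a1 c1 t1') -(klZ a2 c2 t0).
by apply: kl_sumD; rewrite ?mulr_ge0 //; apply: acZ.
Qed.
End KLTerm.

Section ConvexSlopes.
Variable R : realType.
Variables (g : R -> R) (r : R).
Hypothesis r_gt0 : 0 < r.
Hypothesis g_convex : forall u v l, -r < u < r -> -r < v < r -> 0 <= l <= 1 ->
  g (l * u + (1 - l) * v) <= l * g u + (1 - l) * g v.

Lemma convex_chord u v w : -r < u < r -> -r < w < r -> u < v -> v < w ->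
  (g v - g u) * (w - u) <= (g w - g u) * (v - u).
Proof.
move=> hu hw uv vw.
have wu : 0 < w - u by rewrite subr_gt0 (lt_trans uv vw).
pose l := (v - u) / (w - u).
have l01 : 0 <= l <= 1.
  apply/andP; split; first by rewrite divr_ge0 // ltW // subr_gt0.
  by rewrite ler_pdivrMr // mul1r lerD2r ltW.
have ev : v = l * w + (1 - l) * u by rewrite /l; field; rewrite gt_eqF.
have := g_convex hw hu l01; rewrite -ev => gv.
have : g v - g u <= l * (g w - g u) by lra.
move/(ler_wpM2r (ltW wu)); congr (_ <= _).
by rewrite /l; field; rewrite gt_eqF.
Qed.

Definition slope0 h := (g h - g 0) / h.

Lemma slope0_le h1 h2 : -r < h1 < r -> -r < h2 < r -> h1 != 0 -> h2 != 0 ->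
  h1 < h2 -> slope0 h1 <= slope0 h2.
Proof.
move=> hr1 hr2 n1 n2 lt12.
have h0r : -r < 0 < r by rewrite oppr_lt0 r_gt0.
have slopeB : slope0 h1 - slope0 h2 = ((g h1 - g 0) * h2 - (g h2 - g 0) * h1) / (h1 * h2).
  by rewrite /slope0; field; rewrite n1 n2.
rewrite /slope0; have [p1|m1] := ltP 0 h1.
  have p2 : 0 < h2 := lt_trans p1 lt12.
  have := convex_chord h0r hr2 p1 lt12; rewrite !subr0 => ch.
  by rewrite ler_pdivrMr // mulrAC ler_pdivlMr //; lra.
have m1' : h1 < 0 by rewrite lt_neqAle n1 m1.
rewrite -subr_le0 -/(slope0 h1) -/(slope0 h2) slopeB.
have [p2|m2] := ltP 0 h2.
  have := convex_chord hr1 hr2 m1' p2; rewrite !sub0r => ch.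
  apply: mulr_ge0_le0; last by rewrite invr_le0 nmulr_rle0 // ltW.
  lra.
have m2' : h2 < 0 by rewrite lt_neqAle n2 m2.
have := convex_chord hr1 h0r lt12 m2'; rewrite !sub0r => ch.
apply: mulr_le0_ge0; last by rewrite invr_ge0 nmulr_rge0 // ltW.
lra.
Qed.

Definition lslope := sup [set slope0 h | h in [set h | -r < h < 0]].
Definition rslope := inf [set slope0 h | h in [set h | 0 < h < r]].

Let in_left h : -r < h < 0 -> -r < h < r.
Proof. by case/andP=> -> h0; rewrite (lt_trans h0). Qed.

Let in_right h : 0 < h < r -> -r < h < r.
Proof. by case/andP=> h0 ->; rewrite (lt_trans _ h0) // oppr_lt0. Qed.

Let half_in_right : 0 < r / 2 < r.
Proof. by rewrite divr_gt0 //= ltr_pdivrMr // ltr_pMr // ltr1n. Qed.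

Let half_in_left : -r < - (r / 2) < 0.
Proof. by case/andP: half_in_right => h0 hr; rewrite ltrN2 hr oppr_lt0. Qed.

Lemma left_le_right_slope0 h1 h2 : -r < h1 < 0 -> 0 < h2 < r -> slope0 h1 <= slope0 h2.
Proof.
move=> a1 a2; case/andP: (a1) => _ h10; case/andP: (a2) => h20 _.
apply: slope0_le; [exact: in_left|exact: in_right|by rewrite lt_eqF|by rewrite gt_eqF|].
exact: lt_trans h10 h20.
Qed.

Let has_sup_left : has_sup [set slope0 h | h in [set h | -r < h < 0]].
Proof.
split; first by exists (slope0 (- (r / 2))), (- (r / 2)).
by exists (slope0 (r / 2)) => _ [h hh <-]; apply: left_le_right_slope0.
Qed.

Let has_inf_right : has_inf [set slope0 h | h in [set h | 0 < h < r]].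
Proof.
split; first by exists (slope0 (r / 2)), (r / 2).
by exists (slope0 (- (r / 2))) => _ [h hh <-]; apply: left_le_right_slope0.
Qed.

Lemma slope0_le_lslope h : -r < h < 0 -> slope0 h <= lslope.
Proof. by move=> hh; apply: ub_le_sup; [case: has_sup_left|exists h]. Qed.

Lemma rslope_le_slope0 h : 0 < h < r -> rslope <= slope0 h.
Proof. by move=> hh; apply: ge_inf; [case: has_inf_right|exists h]. Qed.

Lemma lslope_le_rslope : lslope <= rslope.
Proof.
apply: lb_le_inf; first by case: has_inf_right.
move=> _ [h2 hh2 <-]; apply: ge_sup; first by case: has_sup_left.
by move=> _ [h1 hh1 <-]; apply: left_le_right_slope0.
Qed.

Lemma convex_support mu : lslope <= mu <= rslope ->
  forall h, -r < h < r -> g 0 + mu * h <= g h.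
Proof.
move=> /andP[lmu mur] h /andP[hlo hhi]; rewrite -lerBrDl.
have [hn|hp|->] := ltgtP h 0; last by rewrite mulr0 subrr.
- have := slope0_le_lslope (h := h); rewrite hlo hn /slope0 => /(_ isT).
  by rewrite ler_ndivrMr // => /(le_trans _); apply; rewrite ler_wnM2r // ltW.
- have := rslope_le_slope0 (h := h); rewrite hp hhi /slope0 => /(_ isT).
  by rewrite ler_pdivlMr // => /(le_trans _); apply; rewrite ler_wpM2r // ltW.
Qed.

Lemma slope0_cvg : lslope = rslope -> slope0 x @[x --> 0^'] --> lslope.
Proof.
move=> lr; apply/cvgrPdist_lt => e e0.
have [_ [h1 /andP[h1r h10] <-] a1] := sup_adherent e0 has_sup_left.
have [_ [h2 /andP[h20 h2r] <-] a2] := inf_adherent e0 has_inf_right.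
rewrite -/lslope in a1; rewrite -/rslope in a2.
apply/nbhs_ballP; exists (Num.min (- h1) h2); first by rewrite /= lt_min oppr_gt0 h10 h20.
move=> t; rewrite /ball /= sub0r normrN lt_min => /andP[t1 t2] tn0.
have [tn|tp] := ltP t 0.
  have t1' : h1 < t by move: t1; rewrite ltr0_norm // ltrN2.
  have ht : -r < t < 0 by rewrite tn andbT (lt_trans h1r t1').
  have := slope0_le_lslope ht; have : slope0 h1 <= slope0 t.
    by apply: slope0_le; rewrite ?in_left ?h1r ?h10 ?lt_eqF.
  by move=> hh1 hh2; rewrite ger0_norm ?subr_ge0 //; lra.
have tp' : 0 < t by rewrite lt_neqAle eq_sym tn0 tp.
have t2' : t < h2 by move: t2; rewrite gtr0_norm.
have ht : 0 < t < r by rewrite tp' (lt_trans t2' h2r).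
have := rslope_le_slope0 ht; have : slope0 t <= slope0 h2.
  by apply: slope0_le; rewrite ?in_right ?h20 ?h2r ?gt_eqF.
by move=> hh1 hh2; rewrite lr ler0_norm ?subr_le0 -?lr //; lra.
Qed.

End ConvexSlopes.

Section Kernels.
Variable R : realType.
Variables A B : finType.
Implicit Types k : A -> B -> R.

Lemma kernel_ge0 k : is_kernel k -> forall a c, 0 <= k a c.
Proof. by move=> hk a c; case: (hk a). Qed.

Lemma kernel_sum1 k : is_kernel k -> forall a, \sum_c k a c = 1.
Proof. by move=> hk a; case: (hk a). Qed.

Lemma kernel_le1 k : is_kernel k -> forall a c, k a c <= 1.
Proof.
move=> hk a c; rewrite -(kernel_sum1 hk a) (bigD1 c) //= lerDl sumr_ge0 // => i _.
exact: kernel_ge0.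
Qed.

Definition kmix k1 k2 t a c := (1 - t) * k1 a c + t * k2 a c.

Lemma is_kernel_mix k1 k2 t : is_kernel k1 -> is_kernel k2 -> 0 <= t <= 1 ->
  is_kernel (kmix k1 k2 t).
Proof.
move=> h1 h2 /andP[t0 t1] a; split.
  by move=> c; rewrite addr_ge0 ?mulr_ge0 ?subr_ge0 ?(kernel_ge0 h1) ?(kernel_ge0 h2).
by rewrite big_split /= -!mulr_sumr (kernel_sum1 h1) (kernel_sum1 h2) !mulr1 subrK.
Qed.

Definition det_kernel (f : A -> B) a c : R := (c == f a)%:R.

Lemma is_kernel_det f : is_kernel (det_kernel f).
Proof.
move=> a; split=> [c|]; first by rewrite ler0n.
by rewrite (bigD1 (f a)) //= /det_kernel eqxx big1 ?addr0 // => c /negbTE ->.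
Qed.

End Kernels.

Section Channels.
Variable R : realType.
Variables (S X Sh Xh : finType).
Variable P : S * X -> R.
Hypothesis P_dist : is_dist P.
Variables (dS : S -> Sh -> R) (dX : X -> Xh -> R).

Local Notation W := (Sh * Xh)%type.
Local Notation PX := (PX P).
Local Notation om := (outmarg P).
Implicit Types (K : X -> W -> R) (x : X) (w : W) (e : X -> W -> R) (Q : W -> R).

Lemma PX_ge0 x : 0 <= PX x.
Proof. by rewrite sumr_ge0 // => s _; case: P_dist. Qed.

Lemma sum_PX : \sum_x PX x = 1.
Proof.
case: P_dist => _ <-; rewrite /Defs.PX exchange_big /= pair_big /=.
by apply: eq_bigr => -[].
Qed.

Lemma sum_PX_kernel K : is_kernel K -> \sum_x \sum_w PX x * K x w = 1.
Proof.
by move=> hK; rewrite -sum_PX; apply: eq_bigr => x _; rewrite -mulr_sumr kernel_sum1 ?mulr1.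
Qed.

Lemma PX_gt0 K x w : 0 < PX x * K x w -> 0 < PX x.
Proof.
by move=> h; rewrite lt0r PX_ge0 andbT; apply: contraTneq h => ->; rewrite mul0r ltxx.
Qed.

Lemma outmarg_ge K : is_kernel K -> forall x w, PX x * K x w <= om K w.
Proof.
move=> hK x w; rewrite /outmarg (bigD1 x) //= lerDl sumr_ge0 // => y _.
by rewrite mulr_ge0 ?PX_ge0 ?(kernel_ge0 hK).
Qed.

Lemma is_dist_outmarg K : is_kernel K -> is_dist (om K).
Proof.
move=> hK; split=> [w|].
  by rewrite sumr_ge0 // => x _; rewrite mulr_ge0 ?PX_ge0 ?(kernel_ge0 hK).
by rewrite /outmarg exchange_big /= sum_PX_kernel.
Qed.

Lemma outmarg_ge0 K : is_kernel K -> forall w, 0 <= om K w.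
Proof. by move=> /is_dist_outmarg[]. Qed.

Lemma PX_outmarg_gt0 K : is_kernel K -> forall x w,
  0 < PX x * K x w -> 0 < PX x * om K w.
Proof.
move=> hK x w h; rewrite mulr_gt0 ?(PX_gt0 h) //.
exact: lt_le_trans h (outmarg_ge hK x w).
Qed.

Lemma outmarg_mix K1 K2 t w : om (kmix K1 K2 t) w = (1 - t) * om K1 w + t * om K2 w.
Proof. by rewrite /outmarg !mulr_sumr -big_split /=; apply: eq_bigr => x _; rewrite /kmix; ring. Qed.

Lemma EdS_mix K1 K2 t : EdS P dS (kmix K1 K2 t) = (1 - t) * EdS P dS K1 + t * EdS P dS K2.
Proof.
rewrite /EdS !mulr_sumr -big_split /=; apply: eq_bigr => x _.
by rewrite !mulr_sumr -big_split /=; apply: eq_bigr => w _; rewrite /kmix; ring.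
Qed.

Lemma EdX_mix K1 K2 t : EdX P dX (kmix K1 K2 t) = (1 - t) * EdX P dX K1 + t * EdX P dX K2.
Proof.
rewrite /EdX !mulr_sumr -big_split /=; apply: eq_bigr => x _.
by rewrite !mulr_sumr -big_split /=; apply: eq_bigr => w _; rewrite /kmix; ring.
Qed.

Definition MIln K := \sum_x \sum_w kl (PX x * K x w) (PX x * om K w).

Lemma MI_MIln b K : MI b P K = MIln K / ln b.
Proof.
rewrite /MI /MIln mulr_suml; apply: eq_bigr => x _; rewrite mulr_suml.
apply: eq_bigr => w _; case: eqP => [->|pk0]; first by rewrite kl0 mul0r.
have px0 : PX x != 0 by apply: contra_not_neq pk0 => ->; rewrite mul0r.
by rewrite /kl /logb mulrA invfM mulrACA divff // mul1r.
Qed.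

Lemma MIln_ge0 K : is_kernel K -> 0 <= MIln K.
Proof.
move=> hK; apply: le_trans (_ : \sum_x \sum_w (PX x * K x w - PX x * om K w) <= _).
  rewrite (eq_bigr (fun=> 0)) ?big1 // => x _.
  by rewrite sumrB -!mulr_sumr (kernel_sum1 hK) (is_dist_outmarg hK).2 subrr.
apply: ler_sum => x _; apply: ler_sum => w _; apply: kl_ge_subr.
- by rewrite mulr_ge0 ?PX_ge0 ?(kernel_ge0 hK).
- by rewrite mulr_ge0 ?PX_ge0 ?(outmarg_ge0 hK).
- exact: PX_outmarg_gt0.
Qed.

Lemma MIln_mix K1 K2 t : is_kernel K1 -> is_kernel K2 -> 0 <= t <= 1 ->
  MIln (kmix K1 K2 t) <= (1 - t) * MIln K1 + t * MIln K2.
Proof.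
move=> h1 h2 t01; rewrite /MIln !mulr_sumr -big_split /=; apply: ler_sum => x _.
rewrite !mulr_sumr -big_split /=; apply: ler_sum => w _.
have -> : PX x * kmix K1 K2 t x w = (1 - t) * (PX x * K1 x w) + t * (PX x * K2 x w).
  by rewrite /kmix; ring.
have -> : PX x * om (kmix K1 K2 t) w = (1 - t) * (PX x * om K1 w) + t * (PX x * om K2 w).
  by rewrite outmarg_mix; ring.
apply: kl_convex => //.
- by rewrite mulr_ge0 ?PX_ge0 ?(kernel_ge0 h1).
- by rewrite mulr_ge0 ?PX_ge0 ?(kernel_ge0 h2).
- by rewrite mulr_ge0 ?PX_ge0 ?(outmarg_ge0 h1).
- by rewrite mulr_ge0 ?PX_ge0 ?(outmarg_ge0 h2).
- exact: PX_outmarg_gt0.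
- exact: PX_outmarg_gt0.
Qed.

(* With the weights [e = lagw mu a] defined below, [Lag e] is [ln b] times the
   Lagrangian of the rate-distortion problem and [lagdual e] its dual function. *)
Definition Lag e K := MIln K - \sum_x \sum_w PX x * K x w * ln (e x w).

Definition partfun e Q x := \sum_w Q w * e x w.

Definition lagdual e Q := - \sum_x PX x * ln (partfun e Q x).

Definition tilt e Q x w := Q w * e x w / partfun e Q x.

Section PositiveWeights.
Variable e : X -> W -> R.
Hypothesis e_gt0 : forall x w, 0 < e x w.

Lemma partfun_gt0 Q : is_dist Q -> forall x, 0 < partfun e Q x.
Proof.
move=> [Q0 Q1] x; rewrite lt0r sumr_ge0 ?andbT; last by move=> w _; rewrite mulr_ge0 // ltW.
apply/eqP => /eqP; rewrite psumr_eq0; last by move=> w _; rewrite mulr_ge0 // ltW.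
move/allP => Qe0; suff : \sum_w Q w = 0 by rewrite Q1 => /eqP; rewrite oner_eq0.
rewrite big1 // => w _.
by have := Qe0 w (mem_index_enum w); rewrite mulf_eq0 (gt_eqF (e_gt0 x w)) orbF => /eqP.
Qed.

Lemma is_kernel_tilt Q : is_dist Q -> is_kernel (tilt e Q).
Proof.
move=> hQ x; have N0 := partfun_gt0 hQ x; split=> [w|].
  by rewrite divr_ge0 ?mulr_ge0 ?(ltW (e_gt0 x w)) ?(ltW N0) //; case: hQ.
by rewrite /tilt -mulr_suml divff // gt_eqF.
Qed.

Lemma tilt_gt0 K x w : is_kernel K -> 0 < PX x * K x w -> 0 < PX x * tilt e (om K) x w.
Proof.
move=> hK pk; rewrite mulr_gt0 ?(PX_gt0 pk) // /tilt divr_gt0 ?mulr_gt0 //.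
  exact: lt_le_trans pk (outmarg_ge hK x w).
exact: partfun_gt0 (is_dist_outmarg hK) x.
Qed.

Definition tilt_gap K x w :=
  kl (PX x * K x w) (PX x * tilt e (om K) x w) - (PX x * K x w - PX x * tilt e (om K) x w).

Lemma tilt_gap_ge0 K : is_kernel K -> forall x w, 0 <= tilt_gap K x w.
Proof.
move=> hK x w; rewrite subr_ge0; apply: kl_ge_subr; last exact: tilt_gt0.
- by rewrite mulr_ge0 ?PX_ge0 ?(kernel_ge0 hK).
- by rewrite mulr_ge0 ?PX_ge0 ?(kernel_ge0 (is_kernel_tilt (is_dist_outmarg hK))).
Qed.

Lemma Lag_lagdual K : is_kernel K ->
  Lag e K = lagdual e (om K) + \sum_x \sum_w tilt_gap K x w.
Proof.
move=> hK; have hQ := is_dist_outmarg hK.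
have hT := is_kernel_tilt hQ.
have mass0 : \sum_x \sum_w (PX x * K x w - PX x * tilt e (om K) x w) = 0.
  by under eq_bigr do rewrite sumrB; rewrite sumrB !sum_PX_kernel // subrr.
have gap_sum : \sum_x \sum_w tilt_gap K x w =
    \sum_x \sum_w kl (PX x * K x w) (PX x * tilt e (om K) x w).
  by rewrite /tilt_gap; under eq_bigr do rewrite sumrB; rewrite sumrB mass0 subr0.
rewrite gap_sum /Lag /lagdual /MIln -sumrB -sumrN -big_split /=.
apply: eq_bigr => x _.
have -> : PX x * ln (partfun e (om K) x) = \sum_w PX x * K x w * ln (partfun e (om K) x).
  by rewrite -mulr_suml -mulr_sumr (kernel_sum1 hK) mulr1.
rewrite -sumrB -sumrN -big_split /=; apply: eq_bigr => w _.
have pk0 : 0 <= PX x * K x w by rewrite mulr_ge0 ?PX_ge0 ?(kernel_ge0 hK).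
rewrite /tilt !mulrA -(kl_tilt pk0 (PX_outmarg_gt0 hK (w:=w)) (e_gt0 x w) (partfun_gt0 hQ x)).
by ring.
Qed.

Lemma Lag_tilt Q : is_dist Q ->
  Lag e (tilt e Q) = lagdual e Q - \sum_w kl (om (tilt e Q) w) (Q w).
Proof.
move=> hQ; set T := tilt e Q; have hT : is_kernel T := is_kernel_tilt hQ.
have hN := partfun_gt0 hQ.
have pointwise x w : kl (PX x * T x w) (PX x * om T w) - PX x * T x w * ln (e x w) =
    - (PX x * T x w * ln (partfun e Q x)) - PX x * T x w * ln (om T w / Q w).
  have [->|pt0] := eqVneq (PX x * T x w) 0; first by rewrite kl0 !mul0r; lra.
  have pt : 0 < PX x * T x w by rewrite lt0r pt0 mulr_ge0 ?PX_ge0 ?(kernel_ge0 hT).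
  have Qw : 0 < Q w.
    rewrite lt0r; case: hQ => -> _; rewrite andbT.
    by apply: contra pt0 => /eqP Q0; rewrite /T /tilt Q0 !mul0r mulr0.
  have pq : 0 < PX x * Q w by rewrite mulr_gt0 ?(PX_gt0 pt).
  have po := PX_outmarg_gt0 hT pt.
  have -> : PX x * T x w * ln (om T w / Q w) =
      kl (PX x * T x w) (PX x * Q w) - kl (PX x * T x w) (PX x * om T w).
    by rewrite kl_subr ?(ltW pt) // invfM mulrACA divff ?mul1r // gt_eqF // (PX_gt0 pt).
  have := kl_tilt (ltW pt) (fun=> pq) (e_gt0 x w) (hN x).
  have -> : PX x * Q w * e x w / partfun e Q x = PX x * T x w by rewrite /T /tilt !mulrA.
  by rewrite klxx; lra.
rewrite /Lag /MIln -sumrB.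
transitivity (\sum_x \sum_w
    (- (PX x * T x w * ln (partfun e Q x)) - PX x * T x w * ln (om T w / Q w))).
  by apply: eq_bigr => x _; rewrite -sumrB; apply: eq_bigr => w _; exact: pointwise.
under eq_bigr do rewrite sumrB sumrN; rewrite sumrB sumrN; congr (- _ - _).
  by apply: eq_bigr => x _; rewrite -mulr_suml -mulr_sumr (kernel_sum1 hT) mulr1.
by rewrite exchange_big /=; apply: eq_bigr => w _; rewrite /kl -mulr_suml.
Qed.

Lemma Lag_tilt_le Q : is_dist Q -> Lag e (tilt e Q) <= lagdual e Q.
Proof.
move=> hQ; have hT := is_kernel_tilt hQ.
rewrite Lag_tilt // gerBl; apply: le_trans (_ : \sum_w (om (tilt e Q) w - Q w) <= _).
  by rewrite sumrB (is_dist_outmarg hT).2 hQ.2 subrr.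
apply: ler_sum => w _; apply: kl_ge_subr; [exact: outmarg_ge0|by case: hQ|].
move=> omT; rewrite lt0r hQ.1 andbT; apply: contraTneq omT => Q0.
by rewrite /outmarg big1 ?ltxx // => x _; rewrite /tilt Q0 !mul0r mulr0.
Qed.

Lemma lagdual_le_Lag K : is_kernel K -> lagdual e (om K) <= Lag e K.
Proof.
move=> hK; rewrite Lag_lagdual // lerDl sumr_ge0 // => x _.
by rewrite sumr_ge0 // => w _; exact: tilt_gap_ge0.
Qed.

Definition Lag_minimizer K :=
  is_kernel K /\ forall K', is_kernel K' -> Lag e K <= Lag e K'.

Lemma Lag_minimizer_lagdual K : Lag_minimizer K ->
  forall Q, is_dist Q -> lagdual e (om K) <= lagdual e Q.
Proof.
move=> [hK Kmin] Q hQ; apply: le_trans (lagdual_le_Lag hK) _.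
exact: le_trans (Kmin _ (is_kernel_tilt hQ)) (Lag_tilt_le hQ).
Qed.

Lemma Lag_minimizer_tilt K : Lag_minimizer K ->
  forall x, 0 < PX x -> forall w, K x w = tilt e (om K) x w.
Proof.
move=> [hK Kmin] x px w; have hQ := is_dist_outmarg hK.
have gap0 : \sum_x \sum_w tilt_gap K x w = 0.
  apply/eqP; rewrite eq_le sumr_ge0 ?andbT => [|y _]; last first.
    by rewrite sumr_ge0 // => v _; exact: tilt_gap_ge0.
  rewrite -(lerD2l (lagdual e (om K))) addr0 -Lag_lagdual //.
  exact: le_trans (Kmin _ (is_kernel_tilt hQ)) (Lag_tilt_le hQ).
move: gap0 => /eqP; rewrite psumr_eq0 => [|y _]; last first.
  by rewrite sumr_ge0 // => v _; exact: tilt_gap_ge0.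
move=> /allP /(_ x (mem_index_enum x)) /eqP /eqP; rewrite psumr_eq0 => [|v _]; last first.
  exact: tilt_gap_ge0.
move=> /allP /(_ w (mem_index_enum w)) /eqP /subr0_eq /kl_eq_subr pkt.
apply: (mulfI (negbT (gt_eqF px))); apply: pkt; last exact: tilt_gt0.
- by rewrite mulr_ge0 ?PX_ge0 ?(kernel_ge0 hK).
- by rewrite mulr_ge0 ?PX_ge0 ?(kernel_ge0 (is_kernel_tilt hQ)).
Qed.

Definition dmix Q t (w0 : W) w := (1 - t) * Q w + t * (w == w0)%:R.

Lemma is_dist_dmix Q t w0 : is_dist Q -> 0 <= t <= 1 -> is_dist (dmix Q t w0).
Proof.
move=> [Q0 Q1] /andP[t0 t1]; split=> [w|].
  by rewrite addr_ge0 ?mulr_ge0 ?subr_ge0.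
rewrite big_split /= -!mulr_sumr Q1 (bigD1 w0) //= eqxx big1 ?addr0 => [|w /negbTE ->//].
by rewrite !mulr1 subrK.
Qed.

Lemma partfun_dmix Q t w0 x :
  partfun e (dmix Q t w0) x = (1 - t) * partfun e Q x + t * e x w0.
Proof.
rewrite /partfun /dmix; under eq_bigr do rewrite mulrDl.
rewrite big_split /= mulr_sumr; congr (_ + _); first by apply: eq_bigr => w _; rewrite mulrA.
rewrite (bigD1 w0) //= eqxx big1 ?addr0 ?mulr1 // => w /negbTE ->.
by rewrite mulr0 mul0r.
Qed.

(* The directional derivative of [lagdual e] at a minimizer [Q] towards the
   point mass at [w0] is nonnegative. *)
Lemma lagdual_min_kkt Q : is_dist Q ->
  (forall Q', is_dist Q' -> lagdual e Q <= lagdual e Q') ->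
  forall w0, \sum_x PX x * e x w0 / partfun e Q x <= 1.
Proof.
move=> hQ Qmin w0; set N := partfun e Q; have N0 := partfun_gt0 hQ.
pose d x := (e x w0 - N x) / N x.
have dir_le0 t : 0 < t -> t < 1 ->
    \sum_x PX x * ((e x w0 - N x) / partfun e (dmix Q t w0) x) <= 0.
  move=> t0 t1; have hQt : is_dist (dmix Q t w0) by apply: is_dist_dmix hQ _; rewrite !ltW.
  set Nt := partfun e (dmix Q t w0); have Nt0 := partfun_gt0 hQt.
  rewrite -(pmulr_rle0 _ t0) mulr_sumr.
  apply: le_trans (_ : \sum_x PX x * (ln (Nt x) - ln (N x)) <= 0).
    apply: ler_sum => x _; rewrite mulrCA ler_wpM2l ?PX_ge0 //.
    have := ln_le_subr1 (divr_gt0 (N0 x) (Nt0 x)); rewrite ln_div ?posrE // -/N -/Nt.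
    have -> : t * ((e x w0 - N x) / Nt x) = 1 - N x / Nt x.
      by rewrite /Nt partfun_dmix -/N; field; rewrite -partfun_dmix gt_eqF.
    lra.
  have := Qmin _ hQt; rewrite /lagdual lerN2 -/N -/Nt => sum_le.
  by under eq_bigr do rewrite mulrBr; rewrite sumrB subr_le0.
have s_le0 : \sum_x PX x * d x <= 0.
  apply: (le0_odds (c := \sum_x PX x * d x ^+ 2)).
    by rewrite sumr_ge0 // => x _; rewrite mulr_ge0 ?PX_ge0 ?sqr_ge0.
  move=> t t0 t1; rewrite mulr_sumr -[X in _ <= X]add0r.
  apply: le_trans (lerD (dir_le0 t t0 t1) (lexx _)); rewrite -big_split /=.
  apply: ler_sum => x _; rewrite [t / _ * _]mulrCA -mulrDr ler_wpM2l ?PX_ge0 //.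
  by rewrite partfun_dmix -/N mix_ratio_bound.
have -> : \sum_x PX x * e x w0 / N x = \sum_x PX x * d x + 1.
  rewrite -sum_PX -big_split /=; apply: eq_bigr => x _.
  by rewrite /d; field; rewrite gt_eqF.
lra.
Qed.

End PositiveWeights.
End Channels.

Section RateFunction.
Variable R : realType.
Variables (S X Sh Xh : finType).
Variable b : R.
Variable P : S * X -> R.
Variables (dS : S -> Sh -> R) (dX : X -> Xh -> R).
Hypothesis b_gt1 : 1 < b.
Hypothesis P_dist : is_dist P.

Local Notation W := (Sh * Xh)%type.
Local Notation feas := (feasible P dS dX).
Local Notation Rf := (RSX b P dS dX).
Implicit Types (K : X -> W -> R) (x : X) (w : W).

Lemma MI_ge0 K : is_kernel K -> 0 <= MI b P K.
Proof. by move=> hK; rewrite MI_MIln divr_ge0 ?MIln_ge0 // ltW // ln_gt0. Qed.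

Lemma MI_mix K1 K2 t : is_kernel K1 -> is_kernel K2 -> 0 <= t <= 1 ->
  MI b P (kmix K1 K2 t) <= (1 - t) * MI b P K1 + t * MI b P K2.
Proof.
move=> h1 h2 t01; rewrite !MI_MIln mulrA [t * _]mulrA -mulrDl.
by rewrite ler_pM2r ?invr_gt0 ?ln_gt0 // MIln_mix.
Qed.

Lemma feasible_mix p1 p2 q1 q2 K1 K2 t : 0 <= t <= 1 ->
  feas p1 p2 K1 -> feas q1 q2 K2 ->
  feas ((1 - t) * p1 + t * q1) ((1 - t) * p2 + t * q2) (kmix K1 K2 t).
Proof.
move=> t01 [k1 [s1 x1]] [k2 [s2 x2]]; have /andP[t0 t1] := t01.
have t1' : 0 <= 1 - t by rewrite subr_ge0.
split; first exact: is_kernel_mix.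
by rewrite EdS_mix EdX_mix; split; apply: lerD; apply: ler_wpM2l.
Qed.

Lemma RSX_le_MI p1 p2 K : feas p1 p2 K -> Rf p1 p2 <= MI b P K.
Proof.
move=> hK; apply: ge_inf; last by exists K.
by exists 0 => _ [K' [hK' _] <-]; apply: MI_ge0.
Qed.

Lemma RSX_approx p1 p2 : (exists K, feas p1 p2 K) -> forall e, 0 < e ->
  exists K, feas p1 p2 K /\ MI b P K < Rf p1 p2 + e.
Proof.
move=> [K hK] e e0.
have hinf : has_inf [set MI b P K | K in feas p1 p2].
  split; first by exists (MI b P K), K.
  by exists 0 => _ [K' [hK' _] <-]; apply: MI_ge0.
by have [_ [K' hK' <-] lt_e] := inf_adherent e0 hinf; exists K'.
Qed.

Lemma RSX_convex p1 p2 q1 q2 t : 0 <= t <= 1 ->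
  (exists K, feas p1 p2 K) -> (exists K, feas q1 q2 K) ->
  Rf ((1 - t) * p1 + t * q1) ((1 - t) * p2 + t * q2) <= (1 - t) * Rf p1 p2 + t * Rf q1 q2.
Proof.
move=> t01 hp hq; have /andP[t0 t1] := t01.
apply/ler_addgt0Pr => e e0.
have [K1 [f1 l1]] := RSX_approx hp e0.
have [K2 [f2 l2]] := RSX_approx hq e0.
apply: le_trans (RSX_le_MI (feasible_mix t01 f1 f2)) _.
apply: le_trans (MI_mix f1.1 f2.1 t01) _.
have t1' : 0 <= 1 - t by rewrite subr_ge0.
have := lerD (ler_wpM2l t1' (ltW l1)) (ler_wpM2l t0 (ltW l2)); lra.
Qed.

Lemma RSX_le p1 p2 q1 q2 : (exists K, feas p1 p2 K) -> p1 <= q1 -> p2 <= q2 ->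
  Rf q1 q2 <= Rf p1 p2.
Proof.
move=> hp le1 le2; apply/ler_addgt0Pr => e e0.
have [K [[k [s x]] l]] := RSX_approx hp e0.
apply: le_trans (ltW l); apply: RSX_le_MI.
by split=> //; split; [exact: le_trans le1|exact: le_trans le2].
Qed.

Lemma inf_range_argmin (T : finType) (f : T -> R) z :
  (forall z', f z <= f z') -> inf (range f) = f z.
Proof.
move=> fz; apply/eqP; rewrite eq_le; apply/andP; split.
  by apply: ge_inf; [exists (f z) => _ [y _ <-]; apply: fz|exists z].
by apply: lb_le_inf; [exists (f z), z|move=> _ [y _ <-]; apply: fz].
Qed.

Lemma feasible_Dadm (w1 : W) p : Dadm P dS dX p -> exists K, feas p.1 p.2 K.
Proof.
move=> [hs hx].
pose zs x := [arg min_(z < w1.1) dSbar P dS x z]%O.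
pose ys x := [arg min_(y < w1.2) dX x y]%O.
have zs_min x z : dSbar P dS x (zs x) <= dSbar P dS x z.
  by rewrite /zs; case: (@arg_minP _ R _ w1.1 xpredT) => // z' _; apply.
have ys_min x y : dX x (ys x) <= dX x y.
  by rewrite /ys; case: (@arg_minP _ R _ w1.2 xpredT) => // y' _; apply.
pose K := det_kernel R (fun x => (zs x, ys x)).
have dirac_sum (f : X -> W -> R) : 
  \sum_x \sum_w PX P x * K x w * f x w = \sum_x PX P x * f x (zs x, ys x).
  apply: eq_bigr => x _; rewrite (bigD1 (zs x, ys x)) //= big1 => [|w /negbTE w0].
    by rewrite /K /det_kernel eqxx mulr1 addr0.
  by rewrite /K /det_kernel w0 mulr0 mul0r.
exists K; split; first exact: is_kernel_det.
split; [apply: le_trans hs|apply: le_trans hx]; rewrite [leLHS]dirac_sum le_eqVlt; apply/orP; left.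
- by apply/eqP/eq_bigr => x _; rewrite (inf_range_argmin (zs_min x)).
- by apply/eqP/eq_bigr => x _; rewrite (inf_range_argmin (ys_min x)).
Qed.

Lemma Din_near_feasible (w1 : W) ds dx : Din b P dS dX (ds, dx) ->
  exists2 r : R, 0 < r &
    forall p1 p2, `|p1 - ds| < r -> `|p2 - dx| < r -> exists K, feas p1 p2 K.
Proof.
move=> hDin; suff [r r0 near_adm] : exists2 r : R, 0 < r &
    forall p1 p2, `|p1 - ds| < r -> `|p2 - dx| < r -> Dadm P dS dX (p1, p2).
  by exists r => // p1 p2 h1 h2; apply: (feasible_Dadm w1 (near_adm p1 p2 h1 h2)).
case: hDin => [|[|[|]]] /interior_box[r r0 near]; exists r => // p1 p2 h1 h2.
all: by case: (near (p1, p2) h1 h2).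
Qed.

Lemma RSX_convex_ds ds dx r : 0 < r ->
  (forall p1 p2, `|p1 - ds| < r -> `|p2 - dx| < r -> exists K, feas p1 p2 K) ->
  forall u v l, -r < u < r -> -r < v < r -> 0 <= l <= 1 ->
  Rf (l * u + (1 - l) * v + ds) dx <= l * Rf (u + ds) dx + (1 - l) * Rf (v + ds) dx.
Proof.
move=> r0 near_feas u v l hu hv /andP[l0 l1].
have feas_near h : -r < h < r -> exists K, feas (h + ds) dx K.
  by move=> hh; apply: near_feas; rewrite ?addrK ?subrr ?normr0 // ltr_norml.
have t01 : 0 <= 1 - l <= 1 by rewrite subr_ge0 l1 lerBlDr lerDl.
have := RSX_convex t01 (feas_near u hu) (feas_near v hv).
have -> : 1 - (1 - l) = l by ring.
by apply: le_trans; rewrite le_eqVlt; apply/orP; left; apply/eqP; congr (Rf _ _); ring.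
Qed.

(* Mixing [K] with a small fraction [th] of [K'] moves along the direction
   [(hs, hx)] at cost [th * (MI K' - R0)]; moving back along [-hx] costs
   [a * th * hx] to first order, and the midpoint of the two moves is a pure
   [d_s]-move of size [th * hs / 2], bounded below by the supporting line. *)
Lemma RSX_subgradient ds dx r mu a K :
  0 < r -> (forall p1 p2, `|p1 - ds| < r -> `|p2 - dx| < r -> exists K, feas p1 p2 K) ->
  feas ds dx K -> MI b P K = Rf ds dx ->
  (forall h, `|h| < r -> Rf ds dx + mu * h <= Rf (ds + h) dx) ->
  (Rf ds (h + dx) - Rf ds dx) / h @[h --> 0^'] --> - a ->
  forall K', is_kernel K' ->
  Rf ds dx + mu * (EdS P dS K' - ds) - a * (EdX P dX K' - dx) <= MI b P K'.
Proof.
move=> r0 near_feas hK hKopt s_supp x_deriv K' hK'.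
set hs := EdS P dS K' - ds; set hx := EdX P dX K' - dx; set R0 := Rf ds dx.
apply: (ler_addgt0_mulPr (normr_ge0 hx)) => e e0.
have [del del0 tangent] := near0_le_tangent e0 x_deriv.
have rd0 : 0 < Num.min r del by rewrite lt_min r0 del0.
have [th /andP[th0 th1]] := small_scale hs hx rd0.
rewrite !lt_min => -[/andP[ths_r ths_del] /andP[thx_r thx_del]].
have th01 : 0 <= th <= 1 by rewrite !ltW.
have mix_feas : feas (ds + th * hs) (dx + th * hx) (kmix K K' th).
  have hK'f : feas (EdS P dS K') (EdX P dX K') K' by split=> //; rewrite !lexx.
  have -> : ds + th * hs = (1 - th) * ds + th * EdS P dS K' by rewrite /hs; ring.
  have -> : dx + th * hx = (1 - th) * dx + th * EdX P dX K' by rewrite /hx; ring.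
  exact: feasible_mix.
have mix_move : Rf (ds + th * hs) (dx + th * hx) <= (1 - th) * R0 + th * MI b P K'.
  by rewrite /R0 -hKopt; apply: le_trans (RSX_le_MI mix_feas) (MI_mix hK.1 hK' th01).
have back_move : Rf ds (dx - th * hx) <= R0 + a * (th * hx) + e * (th * `|hx|).
  have := tangent (- (th * hx)); rewrite normrN normrM (gtr0_norm th0) [- _ + dx]addrC.
  by rewrite mulrNN; apply.
have mid_move : Rf (ds + th * hs / 2) dx <=
    2^-1 * Rf (ds + th * hs) (dx + th * hx) + 2^-1 * Rf ds (dx - th * hx).
  have half : 0 <= (2^-1 : R) <= 1 by rewrite invr_ge0 ler0n invf_le1 ?ler1n.
  have back_feas : exists K, feas ds (dx - th * hx) K.
    by apply: near_feas; rewrite ?subrr ?normr0 // addrAC subrr add0r normrN normrM gtr0_norm.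
  have := RSX_convex half (ex_intro _ _ mix_feas) back_feas.
  have -> : 1 - 2^-1 = 2^-1 :> R by field.
  by congr (Rf _ _ <= _); field.
have supp_move : R0 + mu * (th * hs / 2) <= Rf (ds + th * hs / 2) dx.
  apply: s_supp; rewrite normf_div normrM (gtr0_norm th0) (ger0_norm (ler0n _ 2)).
  by rewrite ltr_pdivrMr // (lt_le_trans ths_r) // ler_pMr // ler1n.
have : th * (R0 + mu * hs - a * hx - (MI b P K' + e * `|hx|)) <= 0 by lra.
by rewrite pmulr_rle0 //; lra.
Qed.

Definition lagw mu a x w := b `^ (mu * dSbar P dS x w.1 - a * dX x w.2).

Lemma lagw_gt0 mu a x w : 0 < lagw mu a x w.
Proof. by apply: powR_gt0; apply: lt_trans b_gt1. Qed.

Lemma Lag_lagw mu a K :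
  Lag P (lagw mu a) K = ln b * (MI b P K - mu * EdS P dS K + a * EdX P dX K).
Proof.
have lnb0 : ln b != 0 by rewrite gt_eqF // ln_gt0.
have weights : \sum_x \sum_w PX P x * K x w * ln (lagw mu a x w) =
    ln b * (mu * EdS P dS K - a * EdX P dX K).
  rewrite /EdS /EdX mulrBr !mulr_sumr -sumrB; apply: eq_bigr => x _.
  by rewrite !mulr_sumr -sumrB; apply: eq_bigr => w _; rewrite /lagw ln_powR; ring.
by rewrite /Lag weights MI_MIln; field.
Qed.

Lemma Lag_minimizer_lagw ds dx mu a K : mu <= 0 -> 0 <= a ->
  feas ds dx K -> MI b P K = Rf ds dx ->
  (forall K', is_kernel K' ->
     Rf ds dx + mu * (EdS P dS K' - ds) - a * (EdX P dX K' - dx) <= MI b P K') ->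
  Lag_minimizer P (lagw mu a) K.
Proof.
move=> mu0 a0 [hK [Ks Kx]] Kopt subgrad; split=> // K' hK'.
rewrite !Lag_lagw; apply: ler_wpM2l; first by rewrite ln_ge0 // ltW.
have := subgrad K' hK'; have := ler_wnM2l mu0 Ks; have := ler_wpM2l a0 Kx.
by rewrite Kopt; lra.
Qed.

Definition kkt a K := forall w0,
  \sum_x PX P x * lagw 0 a x w0 / partfun (lagw 0 a) (outmarg P K) x <= 1.

Lemma kkt0 K : is_kernel K -> kkt 0 K.
Proof.
move=> hK w0; have lagw0 x w : lagw 0 0 x w = 1 by rewrite /lagw !mul0r subr0 powRr0.
have partfun1 x : partfun (lagw 0 0) (outmarg P K) x = 1.
  by rewrite /partfun; under eq_bigr do rewrite lagw0 mulr1; case: (is_dist_outmarg P_dist hK).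
by under eq_bigr do rewrite lagw0 partfun1 mulr1 divr1; rewrite sum_PX.
Qed.

Lemma Lag_minimizer_kkt mu a K : Lag_minimizer P (lagw mu a) K -> forall w0,
  \sum_x PX P x * lagw mu a x w0 / partfun (lagw mu a) (outmarg P K) x <= 1.
Proof.
move=> Kmin; have hQ := is_dist_outmarg P_dist Kmin.1.
have Qmin := Lag_minimizer_lagdual P_dist (@lagw_gt0 mu a) Kmin.
exact: (@lagdual_min_kkt _ _ _ _ _ P P_dist _ (@lagw_gt0 mu a) _ hQ Qmin).
Qed.

Lemma lagwM mu a x w : lagw mu a x w = b `^ (mu * dSbar P dS x w.1) * lagw 0 a x w.
Proof.
rewrite /lagw -powRD; last by apply/implyP => _; rewrite gt_eqF // (lt_trans _ b_gt1).
by rewrite mul0r sub0r addrC.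
Qed.

Lemma lagw_minimizers_dSbar al be a K : al != be ->
  Lag_minimizer P (lagw al a) K -> Lag_minimizer P (lagw be a) K ->
  forall x, 0 < PX P x -> forall w w', 0 < outmarg P K w -> 0 < outmarg P K w' ->
  dSbar P dS x w.1 = dSbar P dS x w'.1.
Proof.
move=> ab Kal Kbe x px; have hQ := is_dist_outmarg P_dist Kal.1.
have lnb0 : 0 < ln b by rewrite ln_gt0.
set Nal := partfun (lagw al a) (outmarg P K) x.
set Nbe := partfun (lagw be a) (outmarg P K) x.
have Nal0 : 0 < Nal by apply: partfun_gt0 => //; apply: lagw_gt0.
have Nbe0 : 0 < Nbe by apply: partfun_gt0 => //; apply: lagw_gt0.
have slope w : 0 < outmarg P K w ->
    (be - al) * ln b * dSbar P dS x w.1 = ln Nbe - ln Nal.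
  move=> ow; have := Lag_minimizer_tilt P_dist (@lagw_gt0 al a) Kal px w.
  rewrite (Lag_minimizer_tilt P_dist (@lagw_gt0 be a) Kbe px w) /tilt -/Nal -/Nbe.
  rewrite -!mulrA => /(mulfI (lt0r_neq0 ow)) /(congr1 (@ln R)).
  by rewrite !ln_div ?posrE ?lagw_gt0 // /lagw !ln_powR; lra.
move=> w w' ow ow'; have := slope w ow; rewrite -(slope w' ow') => /eqP.
rewrite -subr_eq0 -mulrBr mulf_eq0 mulf_eq0 subr_eq0 eq_sym (negbTE ab) gt_eqF //=.
by rewrite subr_eq0 => /eqP.
Qed.

Lemma kkt_two_Lag_minimizers al be a K : al != be ->
  Lag_minimizer P (lagw al a) K -> Lag_minimizer P (lagw be a) K -> kkt a K.
Proof.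
move=> ab Kal Kbe w0; have hQ := is_dist_outmarg P_dist Kal.1.
have [ws ws0] : exists ws, 0 < outmarg P K ws.
  apply: contrapT => none; have : \sum_w outmarg P K w <= 0.
    by rewrite sumr_le0 // => w _; rewrite leNgt; apply/negP => ow; apply: none; exists w.
  by rewrite hQ.2 ler10.
pose c x := dSbar P dS x ws.1.
have partfun_be x : 0 < PX P x -> partfun (lagw be a) (outmarg P K) x =
    b `^ (be * c x) * partfun (lagw 0 a) (outmarg P K) x.
  move=> px; rewrite /partfun mulr_sumr; apply: eq_bigr => w _.
  have [->|ow] := eqVneq (outmarg P K w) 0; first by rewrite !mul0r mulr0.
  have ow' : 0 < outmarg P K w by rewrite lt0r ow hQ.1.
  by rewrite lagwM (lagw_minimizers_dSbar ab Kal Kbe px ow' ws0); ring.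
apply: le_trans (Lag_minimizer_kkt Kbe (ws.1, w0.2)); rewrite le_eqVlt; apply/orP; left.
apply/eqP/eq_bigr => x _; have [->|px] := eqVneq (PX P x) 0; first by rewrite !mul0r.
have pxp : 0 < PX P x by rewrite lt0r px PX_ge0.
rewrite (partfun_be x pxp) (lagwM be) /=.
have -> : lagw 0 a x (ws.1, w0.2) = lagw 0 a x w0 by rewrite /lagw !mul0r.
have bc0 : 0 < b `^ (be * c x) by apply: powR_gt0; apply: lt_trans b_gt1.
have N0 : 0 < partfun (lagw 0 a) (outmarg P K) x by apply: partfun_gt0 => //; apply: lagw_gt0.
by field; rewrite !gt_eqF.
Qed.

Lemma jX_lagw K ds dx a x :
  lambda_s b P dS dX ds dx = 0 -> lambda_x b P dS dX ds dx = a ->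
  jX b P dS dX K ds dx x = - logb b (b `^ (a * dx) * partfun (lagw 0 a) (outmarg P K) x).
Proof.
move=> ls0 lxa; rewrite /jX ls0 lxa /partfun mulr_sumr; congr (- logb b _).
apply: eq_bigr => w _; rewrite /expb /lagw !mul0r mulrCA -powRD; last first.
  by apply/implyP => _; rewrite gt_eqF // (lt_trans _ b_gt1).
by congr (_ * b `^ _); ring.
Qed.

Lemma tail_indicator_le K ds dx a gamma (M : nat) x w :
  lambda_s b P dS dX ds dx = 0 -> lambda_x b P dS dX ds dx = a ->
  is_kernel K -> 0 <= a -> (0 < M)%N -> dX x w.2 <= dx ->
  (if gamma <= jX b P dS dX K ds dx x - logb b M%:R then 1 else 0) <=
    b `^ (- gamma) / M%:R * (lagw 0 a x w / partfun (lagw 0 a) (outmarg P K) x).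
Proof.
move=> ls0 lxa hK a0 M0 dxw; have b0 : 0 < b by apply: lt_trans b_gt1.
have lnb0 : 0 < ln b by rewrite ln_gt0.
set N := partfun (lagw 0 a) (outmarg P K) x.
have N0 : 0 < N := partfun_gt0 (@lagw_gt0 0 a) (is_dist_outmarg P_dist hK) x.
have M0' : 0 < M%:R :> R by rewrite ltr0n.
have bdx0 : 0 < b `^ (a * dx) by apply: powR_gt0.
rewrite (jX_lagw K x ls0 lxa) -/N.
case: ifPn => [|_]; last by rewrite mulr_ge0 ?divr_ge0 ?powR_ge0 ?ltW ?lagw_gt0.
rewrite /logb lerBrDr => /(ler_wpM2r (ltW lnb0)).
rewrite mulrDl !mulNr !divfK ?gt_eqF // lnM ?posrE // ln_powR => ln_le.
have tail : b `^ (a * dx) * N * M%:R <= b `^ (- gamma).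
  have : ln (b `^ (a * dx) * N * M%:R) <= ln (b `^ (- gamma)).
    by rewrite !lnM ?posrE ?mulr_gt0 // !ln_powR; lra.
  by rewrite ler_ln ?posrE ?mulr_gt0 ?powR_gt0.
have lagw_ge : b `^ (- (a * dx)) <= lagw 0 a x w.
  by rewrite /lagw mul0r sub0r; apply: ler_powR; [exact: ltW|rewrite lerN2 ler_wpM2l].
apply: le_trans (_ : b `^ (- gamma) / M%:R * (b `^ (- (a * dx)) / N) <= _); last first.
  apply: ler_wpM2l; first by rewrite divr_ge0 ?powR_ge0 // ltW.
  by apply: ler_wpM2r => //; rewrite invr_ge0 ltW.
have -> : b `^ (- gamma) / M%:R * (b `^ (- (a * dx)) / N) =
    b `^ (- gamma) / (b `^ (a * dx) * N * M%:R).
  by rewrite powRN; field; rewrite !gt_eqF.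
by rewrite ler_pdivlMr ?mulr_gt0 // mul1r.
Qed.

Section Code.
Variables (M : nat) (E : X -> 'I_M -> R) (D : 'I_M -> W -> R).
Hypotheses (E_ker : is_kernel E) (D_ker : is_kernel D).

Local Notation code_sum g :=
  (\sum_s \sum_x \sum_(u < M) \sum_w P (s, x) * E x u * D u w * g s x w).

Lemma code_sum_PX (g : X -> R) : code_sum (fun _ x _ => g x) = \sum_x PX P x * g x.
Proof.
rewrite exchange_big /=; apply: eq_bigr => x _; rewrite /Defs.PX mulr_suml.
apply: eq_bigr => s _.
transitivity (P (s, x) * g x * \sum_(u < M) (E x u * \sum_w D u w)).
  by rewrite mulr_sumr; apply: eq_bigr => u _; rewrite !mulr_sumr; apply: eq_bigr => w _; ring.
under eq_bigr do rewrite (kernel_sum1 D_ker) mulr1.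
by rewrite (kernel_sum1 E_ker) mulr1.
Qed.

Lemma code_sum_le (g : X -> W -> R) : (forall x w, 0 <= g x w) ->
  (forall w, \sum_x PX P x * g x w <= 1) -> code_sum (fun _ x w => g x w) <= M%:R.
Proof.
move=> g0 g_le.
have -> : code_sum (fun _ x w => g x w) =
    \sum_x \sum_(u < M) \sum_w PX P x * E x u * D u w * g x w.
  rewrite exchange_big /=; apply: eq_bigr => x _; rewrite /Defs.PX.
  under [RHS]eq_bigr do under eq_bigr do rewrite !mulr_suml.
  under [RHS]eq_bigr do rewrite exchange_big /=.
  by rewrite exchange_big /=; apply: eq_bigr => s _; rewrite exchange_big.
apply: le_trans (_ : \sum_x \sum_(u < M) \sum_w PX P x * D u w * g x w <= _).
  apply: ler_sum => x _; apply: ler_sum => u _; apply: ler_sum => w _.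
  have -> : PX P x * E x u * D u w * g x w = PX P x * D u w * g x w * E x u by ring.
  rewrite ler_piMr ?(kernel_le1 E_ker) //.
  by rewrite !mulr_ge0 ?PX_ge0 ?(kernel_ge0 D_ker).
have -> : M%:R = \sum_(u < M) \sum_w D u w :> R.
  by rewrite (eq_bigr (fun=> 1)) ?sumr_const ?card_ord // => u _; apply: kernel_sum1.
rewrite exchange_big /=; apply: ler_sum => u _; rewrite exchange_big /=; apply: ler_sum => w _.
rewrite (eq_bigr (fun x => D u w * (PX P x * g x w))) => [|x _]; last by ring.
by rewrite -mulr_sumr ler_piMr ?(kernel_ge0 D_ker).
Qed.

Lemma code_size_gt0 : (0 < M)%N.
Proof.
have [x _ | X0] := pickP (@predT X); last first.
  by have := sum_PX P_dist; rewrite big_pred0 // => /eqP; rewrite eq_sym oner_eq0.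
have [u _ | I0] := pickP (@predT 'I_M); first exact: leq_ltn_trans (leq0n u) (ltn_ord u).
by have := kernel_sum1 E_ker x; rewrite big_pred0 // => /eqP; rewrite eq_sym oner_eq0.
Qed.

Lemma converse_kkt K ds dx a gamma eps : is_kernel K -> 0 <= a ->
  lambda_s b P dS dX ds dx = 0 -> lambda_x b P dS dX ds dx = a -> kkt a K ->
  excess_prob P dS dX E D ds dx <= eps ->
  tail_prob b P dS dX K ds dx M gamma - expb b (- gamma) <= eps.
Proof.
move=> hK a0 ls0 lxa Kkkt excess_le.
have b0 : 0 < b by apply: lt_trans b_gt1.
have M0' : 0 < M%:R :> R by rewrite ltr0n code_size_gt0.
set B := b `^ (- gamma) / M%:R.
have B0 : 0 <= B by rewrite divr_ge0 ?powR_ge0 ?ltW.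
pose N x := partfun (lagw 0 a) (outmarg P K) x.
have N0 x : 0 < N x := partfun_gt0 (@lagw_gt0 0 a) (is_dist_outmarg P_dist hK) x.
pose g x w := lagw 0 a x w / N x.
have g0 x w : 0 <= g x w by rewrite divr_ge0 ?ltW ?lagw_gt0.
pose tail x : R := if gamma <= jX b P dS dX K ds dx x - logb b M%:R then 1 else 0.
have termwise s x w : tail x <=
    (if (dS s w.1 > ds) || (dX x w.2 > dx) then 1 else 0) + B * g x w.
  case: ifPn => [_|]; last rewrite negb_or -!leNgt => /andP[_ dxw].
    by apply: le_trans (_ : 1 <= _); [rewrite /tail; case: ifP|rewrite lerDl mulr_ge0].
  by rewrite add0r /tail /B /g; apply: tail_indicator_le ls0 lxa hK a0 code_size_gt0 dxw.
have tail_le : tail_prob b P dS dX K ds dx M gamma <=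
    excess_prob P dS dX E D ds dx + B * code_sum (fun _ x w => g x w).
  have -> : tail_prob b P dS dX K ds dx M gamma = \sum_x PX P x * tail x by [].
  rewrite -code_sum_PX /excess_prob.
  do 4 (rewrite ?mulr_sumr -big_split /=; apply: ler_sum => ? _).
  rewrite mulrCA -mulrDr ler_wpM2l ?termwise //.
  by rewrite !mulr_ge0 ?(kernel_ge0 E_ker) ?(kernel_ge0 D_ker) //; case: P_dist.
have code_g_le : code_sum (fun _ x w => g x w) <= M%:R.
  apply: code_sum_le => // w; apply: le_trans (Kkkt w).
  by under eq_bigr do rewrite mulrA.
have : B * code_sum (fun _ x w => g x w) <= b `^ (- gamma).
  by apply: le_trans (ler_wpM2l B0 code_g_le) _; rewrite /B divfK ?gt_eqF.
rewrite /expb; lra.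
Qed.

End Code.

Lemma kkt_of_slopes ds dx r K l : 0 < r ->
  (forall p1 p2, `|p1 - ds| < r -> `|p2 - dx| < r -> exists K, feas p1 p2 K) ->
  feas ds dx K -> MI b P K = Rf ds dx -> lambda_s b P dS dX ds dx = 0 ->
  (Rf ds (h + dx) - Rf ds dx) / h @[h --> 0^'] --> l -> 0 <= - l -> kkt (- l) K.
Proof.
move=> r0 near_feas hKf hKopt ls0 x_slope a0.
pose g h := Rf (h + ds) dx.
have g_convex := RSX_convex_ds r0 near_feas.
have ab := lslope_le_rslope r0 g_convex.
set al := lslope g r in ab *; set be := rslope g r in ab *.
have be0 : be <= 0.
  have r2 : 0 < r / 2 < r by rewrite divr_gt0 //= ltr_pdivrMr // ltr_pMr // ltr1n.
  apply: le_trans (rslope_le_slope0 r0 g_convex r2) _.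
  rewrite /slope0 pmulr_lle0 ?invr_gt0 ?divr_gt0 // subr_le0 /g add0r.
  by apply: RSX_le; [exists K|rewrite lerDr ltW // divr_gt0|rewrite lexx].
have Kmin mu : al <= mu <= be -> Lag_minimizer P (lagw mu (- l)) K.
  move=> mu_ab; have mu0 : mu <= 0 by case/andP: mu_ab => _ mu_be; apply: le_trans be0.
  apply: (Lag_minimizer_lagw mu0 a0 hKf hKopt).
  have x_slope' : (Rf ds (h + dx) - Rf ds dx) / h @[h --> 0^'] --> - (- l) by rewrite (opprK l).
  apply: (RSX_subgradient r0 near_feas hKf hKopt _ x_slope').
  move=> h; rewrite ltr_norml => hh.
  by have := convex_support r0 g_convex mu_ab hh; rewrite /g add0r (addrC h).
have [al_be|al_ne_be] := eqVneq al be; last first.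
  by apply: (kkt_two_Lag_minimizers al_ne_be); apply: Kmin; rewrite ?lexx ?ab.
have al0 : al = 0.
  apply/eqP; rewrite -oppr_eq0 -ls0 /lambda_s (derive1_slope (l := al)) //.
  by have := slope0_cvg r0 g_convex al_be; rewrite /slope0 /g add0r.
by apply: Lag_minimizer_kkt; apply: Kmin; rewrite -al_be al0 lexx.
Qed.

Lemma minimizer_kkt ds dx K : Din b P dS dX (ds, dx) ->
  lambda_s b P dS dX ds dx = 0 -> minimizer b P dS dX ds dx K ->
  exists2 a, 0 <= a & lambda_x b P dS dX ds dx = a /\ kkt a K.
Proof.
move=> hDin ls0 [hKf hKopt]; have hK := hKf.1.
have w1 : W.
  have [x _|X0] := pickP (@predT X); last first.
    by exfalso; have := sum_PX P_dist; rewrite big_pred0 // => /eqP; rewrite eq_sym oner_eq0.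
  have [w _|W0] := pickP (@predT W); first exact: w.
  by exfalso; have := kernel_sum1 hK x; rewrite big_pred0 // => /eqP; rewrite eq_sym oner_eq0.
have [r r0 near_feas] := Din_near_feasible w1 hDin.
have [[l x_slope]|no_slope] :=
  pselect (exists l : R, (Rf ds (h + dx) - Rf ds dx) / h @[h --> 0^'] --> l); last first.
  exists 0 => //; split; last exact: kkt0.
  by rewrite /lambda_x derive1_no_slope ?oppr0.
have a0 : 0 <= - l.
  rewrite oppr_ge0; apply: (cvg_slope_le0 r0 _ x_slope) => h /andP[h0 _].
  by apply: RSX_le; [exists K|rewrite lexx|rewrite lerDr ltW].
exists (- l) => //; split; first by rewrite /lambda_x (derive1_slope x_slope).
exact: kkt_of_slopes r0 near_feas hKf hKopt ls0 x_slope a0.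
Qed.

End RateFunction.

Theorem proposition2 (R : realType) (S X Sh Xh : finType) (b : R)
  (P : S * X -> R) (dS : S -> Sh -> R) (dX : X -> Xh -> R)
  (ds dx : R) (K : X -> Sh * Xh -> R)
  (M : nat) (E : X -> 'I_M -> R) (D : 'I_M -> Sh * Xh -> R) (eps : R) :
  1 < b ->
  is_dist P ->
  (forall s z, 0 <= dS s z) -> (forall x y, 0 <= dX x y) ->
  Din b P dS dX (ds, dx) ->
  lambda_s b P dS dX ds dx = 0 ->
  minimizer b P dS dX ds dx K ->
  is_code P dS dX E D ds dx eps ->
  forall gamma : R, 0 <= gamma ->
    tail_prob b P dS dX K ds dx M gamma - expb b (- gamma) <= eps.
Proof.
move=> b_gt1 P_dist _ _ hDin ls0 Kopt [E_ker [D_ker excess_le]] gamma _.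
have [a a0 [lxa Kkkt]] := minimizer_kkt b_gt1 P_dist hDin ls0 Kopt.
exact: (converse_kkt b_gt1 P_dist E_ker D_ker gamma Kopt.1.1 a0 ls0 lxa Kkkt excess_le).
Qed.
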